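(* Let $p\ge3$. Let $m,s,n,j$ be integers and $E$ a real number. If $0\le m<n$, $0\le s<n$, $1<E$, and $|j|>p^{En}$, then $l_\Gamma(t^{-m}a^jt^s)>(E-1)n$.
   Context: $G=BS(1,p)=\langle a,t\mid tat^{-1}=a^p\rangle$ with generating set $\{a^{\pm1},t^{\pm1}\}$; for a word $v$, $l_\Gamma(v)$ denotes the word length (length of a geodesic representative in the Cayley graph) of the element of $G$ represented by $v$. *)

From Stdlib Require Import Reals ZArith.
From mathcomp Require Import all_boot.
From mathcomp Require Import boolp.

Set Implicit Arguments.
Unset Strict Implicit.
Unset Printing Implicit Defensive.

Inductive gen := A | Ai | T | Ti.

Definition ginv (x : gen) : gen :=
  match x with A => Ai | Ai => A | T => Ti | Ti => T end.

Definition word := seq gen.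

(* Two words represent the same element of BS(1,p): the congruence on words
   generated by free cancellation x x^-1 = 1 and the defining relation
   t a t^-1 = a^p, applied inside arbitrary contexts. *)
Inductive weq (p : nat) : word -> word -> Prop :=
| weq_refl u : weq p u u
| weq_sym u v : weq p u v -> weq p v u
| weq_trans u v w : weq p u v -> weq p v w -> weq p u w
| weq_cancel u w x : weq p (u ++ [:: x; ginv x] ++ w) (u ++ w)
| weq_rel u w : weq p (u ++ [:: T; A; Ti] ++ w) (u ++ nseq p A ++ w).

Lemma wl_exists (p : nat) (v : word) :
  exists n, `[< exists w, weq p w v /\ size w = n >].
Proof. exists (size v); apply/asboolP; exists v; split => //; exact: weq_refl. Qed.

Definition word_length (p : nat) (v : word) : nat := ex_minn (wl_exists p v).

Definition apow (j : Z) : word :=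
  if (0 <=? j)%Z then nseq (Z.to_nat j) A else nseq (Z.to_nat (- j)) Ai.

Definition tpow (k : nat) : word := nseq k T.
Definition tinvpow (k : nat) : word := nseq k Ti.

(* BS(1,p) acts on the real line by affine maps, a as y |-> y + 1 and t as
   y |-> p y.  Each generator multiplies a bound on |y| by at most p, so a word
   of length l sends 0 into [-p^l, p^l], while t^-m a^j t^s sends 0 to j / p^m.
   Hence |j| <= p^(l + m), and |j| > p^(E n) with m < n forces l > (E - 1) n. *)
From Stdlib Require Import Reals ZArith Lra Lia.
From mathcomp Require Import all_boot boolp.

Open Scope R_scope.

Definition gen_act (P : R) (x : gen) (y : R) : R :=
  match x with A => y + 1 | Ai => y - 1 | T => P * y | Ti => y / P end.

(* The rightmost letter acts first. *)
Definition word_act (P : R) (w : word) (y : R) : R := foldr (gen_act P) y w.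

Lemma word_act_cat P u v y : word_act P (u ++ v) y = word_act P u (word_act P v y).
Proof. exact: foldr_cat. Qed.

Lemma word_act_nseqA P k y : word_act P (nseq k A) y = y + INR k.
Proof. by elim: k => [|k IH]; rewrite ?[LHS]/= ?IH ?S_INR /=; ring. Qed.

Lemma word_act_nseqAi P k y : word_act P (nseq k Ai) y = y - INR k.
Proof. by elim: k => [|k IH]; rewrite ?[LHS]/= ?IH ?S_INR /=; ring. Qed.

Lemma word_act_apow P j y : word_act P (apow j) y = y + IZR j.
Proof.
rewrite /apow; case: (Z.leb_spec0 0 j) => hj.
- by rewrite word_act_nseqA INR_IZR_INZ Z2Nat.id.
- rewrite word_act_nseqAi INR_IZR_INZ Z2Nat.id ?opp_IZR; [ring | lia].
Qed.

Lemma word_act_tpow0 P k : word_act P (tpow k) 0 = 0.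
Proof. by elim: k => [|k IH] //=; rewrite IH Rmult_0_r. Qed.

Lemma word_act_tinvpow P k y : P <> 0 -> word_act P (tinvpow k) y = y / P ^ k.
Proof.
move=> hP; elim: k => [|k IH] /=; first field.
by rewrite IH; field; split; [exact: pow_nonzero | exact: hP].
Qed.

Lemma word_act_weq (p : nat) u v : (0 < p)%N -> weq p u v ->
  forall y, word_act (INR p) u y = word_act (INR p) v y.
Proof.
move=> /ltP hp; have hP : INR p <> 0 by apply: not_0_INR; lia.
elim=> {u v} [u|u v _ IH|u v w _ IH1 _ IH2|u w x|u w] y.
- by [].
- by rewrite IH.
- by rewrite IH1 IH2.
- by rewrite !word_act_cat; case: x => /=; congr word_act; field.
- by rewrite !word_act_cat /= word_act_nseqA; congr word_act; field.
Qed.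

Lemma word_act0_bound P w : 2 <= P -> Rabs (word_act P w 0) <= P ^ size w.
Proof.
move=> hP; elim: w => [|x w IH] /=; first by rewrite Rabs_R0; lra.
have hPw : 1 <= P ^ size w by apply: pow_R1_Rle; lra.
have hy := Rabs_pos (word_act P w 0).
case: x => /=.
- apply: Rle_trans (Rabs_triang _ _) _; rewrite Rabs_R1; nra.
- apply: Rle_trans (Rabs_triang _ _) _; rewrite Rabs_Ropp Rabs_R1; nra.
- rewrite Rabs_mult Rabs_right; nra.
- have hinv : / P <= 1 by rewrite -Rinv_1; apply: Rinv_le_contravar; lra.
  have hinv0 : 0 < / P by apply: Rinv_0_lt_compat; lra.
  rewrite /Rdiv Rabs_mult Rabs_inv (Rabs_right P); nra.
Qed.

Lemma word_length_witness p v :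
  exists2 w, weq p w v & size w = word_length p v.
Proof.
by rewrite /word_length; case: ex_minnP => l /asboolP [w [hw <-]] _; exists w.
Qed.

Lemma abs_exponent_le_pow p m s j : (2 <= p)%N ->
  IZR (Z.abs j) <= INR p ^ (word_length p (tinvpow m ++ apow j ++ tpow s) + m).
Proof.
move=> hp; have hP : 2 <= INR p by apply: (le_INR 2); apply/leP.
have [w hw <-] := word_length_witness p (tinvpow m ++ apow j ++ tpow s).
have := word_act0_bound (INR p) w hP.
rewrite (word_act_weq _ _ _ (ltnW hp) hw) !word_act_cat word_act_tpow0.
rewrite word_act_apow word_act_tinvpow; last lra.
have hpm : 0 < INR p ^ m by apply: pow_lt; lra.
rewrite Rplus_0_l /Rdiv Rabs_mult Rabs_inv (Rabs_right (INR p ^ m)); last lra.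
rewrite abs_IZR pow_add => hb.
have := Rmult_le_compat_r _ _ _ (Rlt_le _ _ hpm) hb.
by rewrite Rmult_assoc Rinv_l ?Rmult_1_r //; lra.
Qed.

Theorem lemma6p4 (p : nat) (m s n : nat) (j : Z) (E : R) :
  (3 <= p)%N -> (m < n)%N -> (s < n)%N -> Rlt 1 E ->
  Rlt (Rpower (INR p) (Rmult E (INR n))) (IZR (Z.abs j)) ->
  Rlt (Rmult (Rminus E 1) (INR n))
      (INR (word_length p (tinvpow m ++ apow j ++ tpow s))).
Proof.
move=> hp hmn _ hE hj.
have hP : 1 < INR p by apply: (lt_INR 1); exact/ltP/ltnW.
have hjl := abs_exponent_le_pow p m s j (ltnW hp).
set l := word_length _ _ in hjl *.
apply: Rnot_le_lt => hl.
have hm : INR m + 1 <= INR n by rewrite -S_INR; apply: le_INR; apply/leP.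
have hlm : INR (l + m) <= E * INR n by rewrite plus_INR; nra.
have := Rle_Rpower (INR p) _ _ (Rlt_le _ _ hP) hlm.
rewrite Rpower_pow; lra.
Qed.
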